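(* Let $\mathcal{O}\subset\mathbb{R}^n$ be open and let $V_1,\dots,V_K:\mathcal{O}\to\mathbb{R}$ be proper piecewise $C^1$ functions on $\mathcal{O}$. Then the functions $V_M,V_m:\mathcal{O}\to\mathbb{R}$ defined by $V_M(x):=\max_{i=1,\dots,K}V_i(x)$ and $V_m(x):=\min_{i=1,\dots,K}V_i(x)$ are proper piecewise $C^1$ on $\mathcal{O}$.
   Context: For open $\mathcal{O}\subset\mathbb{R}^n$, a continuous $V:\mathcal{O}\to\mathbb{R}$ is proper piecewise $C^1$ on $\mathcal{O}$ if there exist $\mathcal{I}=\{1,\dots,N\}$, closed sets $\mathcal{X}_i\subset\mathbb{R}^n$, open sets $\mathcal{O}_i\subset\mathbb{R}^n$ and continuously differentiable $W_i:\mathcal{O}_i\to\mathbb{R}$ ($i\in\mathcal{I}$) such that: (A) $\mathcal{X}_i\cap\mathcal{O}\subset\mathcal{O}_i$ for all $i$; (B) $\overline{\mathrm{int}(\mathcal{X}_i)}=\mathcal{X}_i$ for all $i$; (C) $\mathcal{O}\subset\bigcup_{i\in\mathcal{I}}\mathcal{X}_i$; (D) $V(x)=W_i(x)$ whenever $x\in\mathcal{X}_i\cap\mathcal{O}$. *)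

From HB Require Import structures.
From mathcomp Require Import all_boot all_order all_algebra.
From mathcomp Require Import all_classical all_reals all_analysis.
Set Implicit Arguments. Unset Strict Implicit. Unset Printing Implicit Defensive.
Import Order.TTheory GRing.Theory Num.Theory.
Import numFieldNormedType.Exports.
Local Open Scope classical_set_scope.
Local Open Scope ring_scope.

(* W is continuously differentiable on the open set U: W is (Fréchet)
   differentiable at every point of U, and its derivative (represented by the
   row vector of its values on the standard basis, i.e. the gradient) depends
   continuously on x in U. *)
Definition C1_on (R : realType) (n : nat) (U : set 'rV[R]_n) (W : 'rV[R]_n -> R) : Prop :=
  (forall x, U x -> differentiable W x) /\
  {in U, continuous (fun x => \row_(j < n) ('d W x (delta_mx 0 j) : R))}.

(* Proper piecewise C^1 on O (V is a total function, only its values on O matter). *)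
Definition proper_pwC1 (R : realType) (n : nat) (O : set 'rV[R]_n) (V : 'rV[R]_n -> R) : Prop :=
  {in O, continuous V} /\
  exists (N : nat) (X : 'I_N -> set 'rV[R]_n) (Oi : 'I_N -> set 'rV[R]_n)
         (W : 'I_N -> 'rV[R]_n -> R),
    (forall i, closed (X i)) /\
    (forall i, open (Oi i)) /\
    (forall i, C1_on (Oi i) (W i)) /\
    (forall i, X i `&` O `<=` Oi i) /\
    (forall i, closure (interior (X i)) = X i) /\
    (O `<=` \bigcup_i X i) /\
    (forall i x, X i x -> O x -> V x = W i x).

Definition vmax (R : realType) (n K : nat) (hK : (0 < K)%N) (V : 'I_K -> 'rV[R]_n -> R) :=
  fun x => \big[Num.max/V (Ordinal hK) x]_(i < K) V i x.
Definition vmin (R : realType) (n K : nat) (hK : (0 < K)%N) (V : 'I_K -> 'rV[R]_n -> R) :=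
  fun x => \big[Num.min/V (Ordinal hK) x]_(i < K) V i x.

From HB Require Import structures.
From mathcomp Require Import all_boot all_order all_algebra.
From mathcomp Require Import all_classical all_reals all_analysis.
Import Order.TTheory GRing.Theory Num.Theory.
Import numFieldNormedType.Exports.
Local Open Scope classical_set_scope.
Local Open Scope ring_scope.

Set Implicit Arguments.
Unset Strict Implicit.
Unset Printing Implicit Defensive.

(* Write F for the maximum (or the minimum) of the V_k.  At each point of O,
   F coincides with some V_k, hence with one of the C^1 functions W of V_k on
   the corresponding piece X.  The coincidence set
   A = {x in O ∩ X | W x = F x} is relatively closed in O, since F and W are
   continuous there, so the regular closed sets closure (interior A) are
   candidate pieces for F.  They cover O: otherwise the uncovered part of O is
   a nonempty open set covered by finitely many relatively closed sets A, and
   by a finite Baire argument one of them has an interior point there, which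
   lies in closure (interior A). *)

Lemma finite_closed_cover_interior (T : topologicalType) (I : eqType)
    (G : I -> set T) (s : seq I) (U : set T) :
  open U -> U !=set0 -> (forall y, U y -> exists2 i, i \in s & G i y) ->
  (forall i, U `&` closure (G i) `<=` G i) ->
  exists2 i, i \in s & U `&` (G i)° !=set0.
Proof.
elim: s U => [|a s IH] U oU [y Uy] cov rc; first by case: (cov y Uy).
have [|Ua0] := pselect (U `&` (G a)° !=set0).
  by exists a; rewrite ?mem_head.
have [[z [Uz nGz]]|UGa] := pselect (exists z, U z /\ ~ G a z); last first.
  have : U `<=` (G a)°.
    rewrite -open_subsetE // => w Uw; apply: contrapT => nGw; apply: UGa.
    by exists w.
  by move=> /(_ y Uy) Gay; case: Ua0; exists y.
pose U' := U `&` ~` closure (G a).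
have oU' : open U' by apply: openI => //; exact/closed_openC/closed_closure.
have [i si [w [[Uw _] Giw]]] : exists2 i, i \in s & U' `&` (G i)° !=set0.
  apply: IH => //; first by exists z; split=> // Gaz; apply: nGz; exact: rc.
    move=> v [Uv nGav]; have [i] := cov v Uv; rewrite in_cons => /orP[/eqP->|].
      by move=> Gav; exfalso; exact/nGav/subset_closure.
    by exists i.
  by move=> i v [[Uv _] Gv]; exact: rc.
by exists i; [rewrite in_cons si orbT | exists w].
Qed.

Lemma closure_agree (T : topologicalType) (R : realType) (f g : T -> R)
    (A : set T) (y : T) :
  {for y, continuous f} -> {for y, continuous g} ->
  (forall t, A t -> f t = g t) -> closure A y -> f y = g y.
Proof.
move=> fy gy fgA Ay; apply/eqP; apply: contrapT => /negP fgy.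
have : \forall t \near y, f t - g t != 0.
  apply: (@cvgr_neq0 _ _ _ _ _ (fun t => f t - g t) (f y - g y)).
    exact: cvgB.
  by rewrite subr_eq0.
by move=> /Ay[t [/fgA -> /=]]; rewrite subrr eqxx.
Qed.

Lemma big_selective (I T : Type) (op : T -> T -> T) (r : seq I) (F : I -> T)
    (i0 : I) :
  (forall a b, op a b = a \/ op a b = b) ->
  exists j, \big[op/F i0]_(i <- r) F i = F j.
Proof.
move=> opab; elim/big_ind: _ => [|_ _ [i ->] [j ->]|i _]; try by eexists.
by have [->|->] := opab (F i) (F j); eexists.
Qed.

Lemma max_selective (d : Order.disp_t) (T : orderType d) (a b : T) :
  Order.max a b = a \/ Order.max a b = b.
Proof. by rewrite maxEle; case: ifP; auto. Qed.

Lemma min_selective (d : Order.disp_t) (T : orderType d) (a b : T) :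
  Order.min a b = a \/ Order.min a b = b.
Proof. by rewrite minEle; case: ifP; auto. Qed.

Lemma continuous_big (T : topologicalType) (R : realType) (op : R -> R -> R)
    (I : Type) (r : seq I) (f : I -> T -> R) (f0 : T -> R) (x : T) :
  (forall g h : T -> R, {for x, continuous g} -> {for x, continuous h} ->
    {for x, continuous (fun y => op (g y) (h y))}) ->
  {for x, continuous f0} -> (forall i, {for x, continuous (f i)}) ->
  {for x, continuous (fun y => \big[op/f0 y]_(i <- r) f i y)}.
Proof.
move=> op_cont f0x fx; elim: r => [|a r IH].
  by rewrite (_ : (fun y => _) = f0) //; apply/funext => y; rewrite big_nil.
rewrite (_ : (fun y => _) = fun y => op (f a y) (\big[op/f0 y]_(i <- r) f i y)).
  exact: op_cont.
by apply/funext => y; rewrite big_cons.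
Qed.

Section PiecewiseC1.
Variables (R : realType) (n : nat) (O : set 'rV[R]_n).

Lemma C1_on_continuous (U : set 'rV[R]_n) (f : 'rV[R]_n -> R) :
  C1_on U f -> {in U, continuous f}.
Proof.
by move=> [df _] x /set_mem Ux; exact: differentiable_continuous (df x Ux).
Qed.

Record pwC1_atlas (V : 'rV[R]_n -> R) := PwC1Atlas {
  atlas_index : finType;
  piece : atlas_index -> set 'rV[R]_n;
  piece_dom : atlas_index -> set 'rV[R]_n;
  piece_fun : atlas_index -> 'rV[R]_n -> R;
  closed_piece : forall i, closed (piece i);
  open_piece_dom : forall i, open (piece_dom i);
  C1_piece_fun : forall i, C1_on (piece_dom i) (piece_fun i);
  piece_sub_dom : forall i, piece i `&` O `<=` piece_dom i;
  regular_piece : forall i, closure (piece i)° = piece i;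
  piece_cover : O `<=` \bigcup_i piece i;
  piece_funE : forall i x, piece i x -> O x -> V x = piece_fun i x }.

Lemma proper_pwC1_of_atlas (V : 'rV[R]_n -> R) :
  {in O, continuous V} -> pwC1_atlas V -> proper_pwC1 O V.
Proof.
move=> contV [I X Oi W cX oOi C1W XOi regX covX VW]; split => //.
exists #|I|, (X \o enum_val), (Oi \o enum_val), (W \o enum_val).
split=> [k|]; first exact: cX.
split=> [k|]; first exact: oOi.
split=> [k|]; first exact: C1W.
split=> [k|]; first exact: XOi.
split=> [k|]; first exact: regX.
split=> [x /covX[i _ Xx]|k x]; last exact: VW.
by exists (enum_rank i); rewrite //= enum_rankK.
Qed.

Definition atlas_of_proper_pwC1 (V : 'rV[R]_n -> R) (hV : proper_pwC1 O V) :
  pwC1_atlas V.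
Proof.
case: hV => _ /cid[N /cid[X /cid[Oi /cid[W]]]].
move=> [cX [oOi [C1W [XOi [regX [covX VW]]]]]].
exact: (@PwC1Atlas _ 'I_N X Oi W).
Defined.

Section Selection.
Hypothesis openO : open O.
Variables (I : finType) (X Oi : I -> set 'rV[R]_n) (W : I -> 'rV[R]_n -> R).
Variable F : 'rV[R]_n -> R.
Hypotheses (contF : {in O, continuous F}) (closedX : forall i, closed (X i)).
Hypothesis openOi : forall i, open (Oi i).
Hypothesis C1W : forall i, C1_on (Oi i) (W i).
Hypothesis XO_Oi : forall i, X i `&` O `<=` Oi i.
Hypothesis selectF : forall x, O x -> exists i, X i x /\ W i x = F x.

Let agree i := [set y | O y /\ X i y /\ W i y = F y].

Lemma agree_relclosed i : O `&` closure (agree i) `<=` agree i.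
Proof.
move=> y [Oy cly]; have Xy : X i y.
  by apply: closedX; apply: closureS cly => z [_ []].
have Wy := C1_on_continuous (C1W i) (mem_set (XO_Oi (conj Xy Oy))).
split=> //; split=> //.
by apply: (closure_agree Wy (contF (mem_set Oy)) _ cly) => t [_ []].
Qed.

Let reg_agree i := closure (agree i)°.

Lemma reg_agree_sub i : O `&` reg_agree i `<=` agree i.
Proof.
move=> y [Oy Py]; apply: agree_relclosed; split=> //.
exact: (closureS (@interior_subset _ _) Py).
Qed.

Lemma reg_agree_cover : O `<=` \bigcup_i reg_agree i.
Proof.
move=> x Ox; apply: contrapT => nPx.
pose B := O `&` ~` \bigcup_i reg_agree i.
have openB : open B.
  apply: openI => //; apply/closed_openC/closed_bigcup => [|i _].
    exact: finite_finset.
  exact: closed_closure.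
have [|||i _ [z [[_ nPz] Az]]] :=
  @finite_closed_cover_interior _ _ agree (enum I) B openB.
- by exists x.
- move=> y [Oy _]; have [i [Xy WFy]] := selectF Oy.
  by exists i; rewrite ?mem_enum.
- by move=> i y [[Oy _] cly]; apply: agree_relclosed.
by apply: nPz; exists i => //; exact: subset_closure.
Qed.

Lemma proper_pwC1_of_C1_selection : proper_pwC1 O F.
Proof.
apply: proper_pwC1_of_atlas => //.
apply: (@PwC1Atlas F I reg_agree Oi W) => // [i|i y [Py Oy]|i||i y Py Oy].
- exact: closed_closure.
- by have [_ [Xy _]] := reg_agree_sub (conj Oy Py); exact: XO_Oi.
- exact: closure_interior_idem.
- exact: reg_agree_cover.
by have [_ [_ ->]] := reg_agree_sub (conj Oy Py).
Qed.

End Selection.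

Lemma proper_pwC1_of_selection (J : finType) (V : J -> 'rV[R]_n -> R)
    (F : 'rV[R]_n -> R) :
  open O -> (forall j, proper_pwC1 O (V j)) -> {in O, continuous F} ->
  (forall x, O x -> exists j, F x = V j x) -> proper_pwC1 O F.
Proof.
move=> openO hV contF selF; pose A j := atlas_of_proper_pwC1 (hV j).
pose I := {j : J & atlas_index (A j)}.
apply: (@proper_pwC1_of_C1_selection openO I (fun s => piece (tagged s))
  (fun s => piece_dom (tagged s)) (fun s => piece_fun (tagged s))) => //.
- by move=> [j i]; exact: closed_piece.
- by move=> [j i]; exact: open_piece_dom.
- by move=> [j i]; exact: C1_piece_fun.
- by move=> [j i]; exact: piece_sub_dom.
move=> x Ox; have [j ->] := selF x Ox; have [i _ Xx] := piece_cover (A j) Ox.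
by exists (Tagged (fun j => atlas_index (A j)) i); rewrite -piece_funE.
Qed.

End PiecewiseC1.

Theorem proposition3 (R : realType) (n : nat) (O : set 'rV[R]_n) (hO : open O)
  (K : nat) (hK : (0 < K)%N) (V : 'I_K -> 'rV[R]_n -> R)
  (hV : forall i, proper_pwC1 O (V i)) :
  proper_pwC1 O (vmax hK V) /\ proper_pwC1 O (vmin hK V).
Proof.
have contV k : {in O, continuous (V k)} by have [] := hV k.
split; apply: proper_pwC1_of_selection hO hV _ _ => [x Ox|x _].
- apply: continuous_big (contV _ _ Ox) (fun k => contV k _ Ox) => f g.
  exact: continuous_max.
- exact: big_selective (@max_selective _ _).
- apply: continuous_big (contV _ _ Ox) (fun k => contV k _ Ox) => f g.
  exact: continuous_min.
- exact: big_selective (@min_selective _ _).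
Qed.
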